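(* For any graph $G=G_1\sqcup G_2$ with no edges connecting $G_1$ to $G_2$, we have $\lfloor \mathrm{sp}\rfloor(G)=\lfloor \mathrm{sp}\rfloor(G_1)+\lfloor \mathrm{sp}\rfloor(G_2)$.
   Context: All graphs are finite, have at least one vertex, have no loops, and may have multiple (parallel) edges. A unique shortest path is a shortest $u$–$v$ path $P$ such that every $u$–$v$ path with the same number of vertices is identical to $P$, where two paths with different edge sequences are different even if their vertex sequences agree; a single vertex is a unique shortest path. The parade number $\mathrm{usp}(G)$ is the largest number of vertices of a unique shortest path in $G$. The spectator number is $\mathrm{sp}(G)=|V(G)|-\mathrm{usp}(G)$. A minor of $H$ is any graph obtained from $H$ by a sequence of: deleting an isolated vertex, deleting an edge, contracting an edge that has no edge parallel to it. The spectator floor $\lfloor \mathrm{sp}\rfloor(G)$ is the minimum of $\mathrm{sp}(H)$ over all graphs $H$ of which $G$ is a minor. *)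

From Stdlib Require Import ClassicalEpsilon.
From mathcomp Require Import all_boot.
Set Implicit Arguments. Unset Strict Implicit. Unset Printing Implicit Defensive.

(* A multigraph: vertices 'I_nv, edges 'I_ne, each edge has an (unordered)
   pair of ends, stored as an ordered pair. *)
Record mgraph := MGraph {
  nv : nat;
  ne : nat;
  ends : 'I_ne -> 'I_nv * 'I_nv }.
Arguments ends : clear implicits.

Definition wf (G : mgraph) : bool :=
  (0 < nv G) && [forall e, (ends G e).1 != (ends G e).2].

Definition same_ends (T : eqType) (p q : T * T) : bool :=
  (p == q) || (p == (q.2, q.1)).

Definition mapp (A B : Type) (f : A -> B) (p : A * A) : B * B := (f p.1, f p.2).

Fixpoint walk (G : mgraph) (x : 'I_(nv G)) (s : seq ('I_(ne G) * 'I_(nv G))) : bool :=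
  match s with
  | [::] => true
  | p :: s' => same_ends (ends G p.1) (x, p.2) && walk p.2 s'
  end.

(* a path: a walk without repeated vertices; it has (size s).+1 vertices *)
Definition is_path (G : mgraph) (x : 'I_(nv G)) (s : seq ('I_(ne G) * 'I_(nv G))) : bool :=
  walk x s && uniq (x :: map snd s).

Definition endp (G : mgraph) (x : 'I_(nv G)) (s : seq ('I_(ne G) * 'I_(nv G))) : 'I_(nv G) :=
  last x (map snd s).

Definition is_usp (G : mgraph) (x : 'I_(nv G)) (s : seq ('I_(ne G) * 'I_(nv G))) : Prop :=
  is_path x s /\
  (forall s', is_path x s' -> endp x s' = endp x s -> size s <= size s') /\
  (forall s', is_path x s' -> endp x s' = endp x s -> size s' = size s -> s' = s).

Definition pbool (P : Prop) : bool :=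
  if excluded_middle_informative P then true else false.

Definition usp (G : mgraph) : nat :=
  \max_(k < (nv G).+1)
     (if pbool (exists (x : 'I_(nv G)) s, is_usp x s /\ (size s).+1 = k) then nat_of_ord k else 0).

Definition sp (G : mgraph) : nat := nv G - usp G.

Definition iso (G H : mgraph) : Prop :=
  exists (f : 'I_(nv G) -> 'I_(nv H)) (g : 'I_(ne G) -> 'I_(ne H)),
    bijective f /\ bijective g /\
    forall e, same_ends (ends H (g e)) (mapp f (ends G e)).

Definition del_vertex (G H : mgraph) : Prop :=
  exists v : 'I_(nv H),
    (forall e, v != (ends H e).1 /\ v != (ends H e).2) /\
    exists (f : 'I_(nv G) -> 'I_(nv H)) (g : 'I_(ne G) -> 'I_(ne H)),
      injective f /\ (forall y, f y != v) /\ (forall x, x != v -> exists y, f y = x) /\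
      bijective g /\
      forall e, same_ends (ends H (g e)) (mapp f (ends G e)).

Definition del_edge (G H : mgraph) : Prop :=
  exists e0 : 'I_(ne H),
    exists (f : 'I_(nv G) -> 'I_(nv H)) (g : 'I_(ne G) -> 'I_(ne H)),
      bijective f /\
      injective g /\ (forall e, g e != e0) /\ (forall e, e != e0 -> exists e', g e' = e) /\
      forall e, same_ends (ends H (g e)) (mapp f (ends G e)).

Definition contract (G H : mgraph) : Prop :=
  exists e0 : 'I_(ne H),
    (forall e, e != e0 -> ~~ same_ends (ends H e) (ends H e0)) /\
    exists (f : 'I_(nv H) -> 'I_(nv G)) (g : 'I_(ne G) -> 'I_(ne H)),
      (forall y, exists x, f x = y) /\
      (forall x y, f x = f y <-> (x = y \/ same_ends (x, y) (ends H e0))) /\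
      injective g /\ (forall e, g e != e0) /\ (forall e, e != e0 -> exists e', g e' = e) /\
      forall e, same_ends (ends G e) (mapp f (ends H (g e))).

Definition minor_step (G H : mgraph) : Prop :=
  wf G /\ (iso G H \/ del_vertex G H \/ del_edge G H \/ contract G H).

Inductive minor : mgraph -> mgraph -> Prop :=
  | minor_refl H : minor H H
  | minor_cons G K H : minor_step G K -> minor K H -> minor G H.

(* spectator floor: min of sp H over all graphs H of which G is a minor.
   For a graph G, sp G itself is attained (H = G), so restricting the
   minimum to values <= sp G is harmless. *)
Definition spfloor (G : mgraph) : nat :=
  \big[minn/sp G]_(k < (sp G).+1 | pbool (exists H, wf H /\ minor G H /\ sp H = k)) nat_of_ord k.

Definition dunion (G1 G2 : mgraph) : mgraph :=
  @MGraph (nv G1 + nv G2) (ne G1 + ne G2)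
    (fun e => match split e with
              | inl e1 => mapp (@lshift (nv G1) (nv G2)) (ends G1 e1)
              | inr e2 => mapp (@rshift (nv G1) (nv G2)) (ends G2 e2)
              end).

(* For the upper bound, take majors H1 of G1 and H2 of G2 (graphs having them as minors) that
   realise the spectator floors, and longest unique shortest paths P1 of H1 and P2 of H2.  Adding
   to the disjoint union of H1 and H2 one edge from the last vertex of P1 to the first vertex of
   P2 gives a major of G in which P1, the new edge and P2 form a unique shortest path: every path
   between its ends must cross the new edge, and its two halves are then paths of H1 and H2 with
   the ends of P1 and P2.  So that major has spectator number at most sp H1 + sp H2.

   For the lower bound, let H be a major of G1 + G2.  Following the minor operations backwards,
   the vertices of H can be coloured in two colours so that Gi is a minor of the subgraph of H
   induced by colour i.  Add to both colour classes the vertex set P of a longest unique shortest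
   path of H: P remains a unique shortest path in both induced subgraphs, which overlap only in
   P, so their spectator numbers add up to at most |V(H)| + |P| - 2|P| = sp H. *)

From mathcomp Require Import all_boot.
From mathcomp Require Import zify.
From Stdlib Require Import ClassicalEpsilon.
Set Implicit Arguments. Unset Strict Implicit. Unset Printing Implicit Defensive.

Lemma pboolP (P : Prop) : reflect P (pbool P).
Proof. by rewrite /pbool; case: excluded_middle_informative => h; constructor. Qed.

Lemma inj_surj_bij (A B : Type) (f : A -> B) :
  injective f -> (forall y, exists x, f x = y) -> bijective f.
Proof.
move=> f_inj f_surj.
have g y : {x | f x = y} by apply: constructive_indefinite_description.
exists (fun y => sval (g y)) => [x | y]; last by case: (g y).
by apply: f_inj; case: (g (f x)).
Qed.

Lemma bij_surj (A B : Type) (f : A -> B) : bijective f -> forall y, exists x, f x = y.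
Proof. by case=> g _ fK y; exists (g y). Qed.

Lemma comm_inj (A B C D : Type) (h' : A -> C) (k1 : A -> B) (k2 : C -> D) (h : B -> D) :
  (forall x, k2 (h' x) = h (k1 x)) -> injective k1 -> injective h -> injective h'.
Proof. by move=> hh k1_inj h_inj x y /(congr1 k2); rewrite !hh => /h_inj /k1_inj. Qed.

Lemma bigmin_le (I : eqType) (r : seq I) (P : pred I) (F : I -> nat) x k :
  k \in r -> P k -> \big[minn/x]_(i <- r | P i) F i <= F k.
Proof.
elim: r => // a r IH; rewrite inE big_cons => /orP [/eqP <- -> | k_r Pk].
  exact: geq_minl.
by case: (P a); rewrite ?geq_min IH ?orbT.
Qed.

Section SameEnds.
Variable T : eqType.
Implicit Types p q : T * T.

Lemma same_endsP p q : reflect (p = q \/ p = (q.2, q.1)) (same_ends p q).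
Proof. by rewrite /same_ends; apply: (iffP orP); case=> /eqP; auto. Qed.

Lemma same_ends_refl p : same_ends p p.
Proof. by rewrite /same_ends eqxx. Qed.

Lemma same_endsC p q : same_ends p q = same_ends q p.
Proof.
by apply/idP/idP; case: p q => [a b] [c d] /same_endsP [] [-> ->];
  rewrite /same_ends /= !eqxx ?orbT.
Qed.

Lemma same_endsE (a b c d : T) :
  same_ends (a, b) (c, d) -> (a = c /\ b = d) \/ (a = d /\ b = c).
Proof. by case/same_endsP => [] [-> ->]; auto. Qed.

Lemma same_ends_snd (a b c w : T) : same_ends (a, b) (c, w) -> w = b \/ w = a.
Proof. by case/same_endsE => [] [-> ->]; auto. Qed.
End SameEnds.

Lemma same_ends_map (A B : eqType) (h : A -> B) p q :
  same_ends p q -> same_ends (mapp h p) (mapp h q).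
Proof.
by case: p q => [a b] [c d] /same_endsP [] [-> ->]; rewrite /same_ends /mapp /= !eqxx ?orbT.
Qed.

Lemma same_ends_inj (A B : eqType) (h : A -> B) p q : injective h ->
  same_ends (mapp h p) (mapp h q) = same_ends p q.
Proof.
move=> h_inj; apply/idP/idP; last exact: same_ends_map.
by case: p q => [a b] [c d] /same_endsP [] [/h_inj -> /h_inj ->];
  rewrite /same_ends /= !eqxx ?orbT.
Qed.

Lemma mapp_id (T : Type) (p : T * T) : mapp id p = p.
Proof. by case: p. Qed.

(** * Paths and unique shortest paths *)

Notation steps G := (seq ('I_(ne G) * 'I_(nv G))).

Lemma is_path_size (G : mgraph) x s : is_path (G:=G) x s -> size s < nv G.
Proof.
case/andP=> _ s_uniq; have := max_card (mem (x :: map snd s)).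
by rewrite (card_uniqP s_uniq) /= size_map card_ord.
Qed.

Lemma usp_ge_path (G : mgraph) x s : is_usp (G:=G) x s -> (size s).+1 <= usp G.
Proof.
move=> s_usp; have s_lt : (size s).+1 < (nv G).+1 by apply: is_path_size (proj1 s_usp).
apply: leq_trans (leq_bigmax (Ordinal s_lt)) => /=.
by case: pboolP => // -[]; exists x, s.
Qed.

Lemma usp_le_nv (G : mgraph) : usp G <= nv G.
Proof. by apply/bigmax_leqP => i _; case: pbool => //; rewrite -ltnS. Qed.

Lemma is_usp_nil (G : mgraph) (x : 'I_(nv G)) : is_usp x [::].
Proof. by split; [|split] => // -[]. Qed.

Lemma usp_attained (G : mgraph) : 0 < nv G ->
  exists x s, is_usp (G:=G) x s /\ (size s).+1 = usp G.
Proof.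
move=> nv_gt0; have usp_gt0 := usp_ge_path (is_usp_nil (Ordinal nv_gt0)).
have [k usp_eq] := eq_bigmax (fun k : 'I_(nv G).+1 =>
  if pbool (exists (x : 'I_(nv G)) s, is_usp x s /\ (size s).+1 = k) then nat_of_ord k else 0)
  (ltac:(by rewrite card_ord)).
by move: usp_gt0; rewrite /usp usp_eq; case: pboolP.
Qed.

Lemma walk_cons G (x : 'I_(nv G)) e w s :
  walk x ((e, w) :: s) = same_ends (ends G e) (x, w) && walk w s.
Proof. by []. Qed.

Lemma endp_cons G (x : 'I_(nv G)) e w s : endp x ((e, w) :: s) = endp w s.
Proof. by []. Qed.

Lemma walk_cat G (x : 'I_(nv G)) s1 s2 :
  walk x (s1 ++ s2) = walk x s1 && walk (endp x s1) s2.
Proof. by elim: s1 x => //= -[e w] s1 IH x; rewrite IH andbA. Qed.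

Lemma endp_cat G (x : 'I_(nv G)) s1 s2 : endp x (s1 ++ s2) = endp (endp x s1) s2.
Proof. by rewrite /endp map_cat last_cat. Qed.

Lemma is_path_prefix G (x : 'I_(nv G)) s1 s2 : is_path x (s1 ++ s2) -> is_path x s1.
Proof.
case/andP; rewrite walk_cat /is_path map_cat -cat_cons cat_uniq.
by case/andP=> -> _ /andP [].
Qed.

Lemma is_path_suffix G (x : 'I_(nv G)) s1 s2 : is_path x (s1 ++ s2) -> is_path (endp x s1) s2.
Proof.
case/andP; rewrite walk_cat => /andP [_ s2_walk]; rewrite map_cat -cat_cons cat_uniq.
case/and3P=> _ s1_s2 s2_uniq; rewrite /is_path s2_walk /= s2_uniq andbT.
by apply: contra s1_s2 => endp_s2; apply/hasP; exists (endp x s1) => //; exact: mem_last.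
Qed.

Definition embedding (A B : mgraph)
    (hv : 'I_(nv A) -> 'I_(nv B)) (he : 'I_(ne A) -> 'I_(ne B)) :=
  [/\ injective hv, injective he & forall e, ends B (he e) = mapp hv (ends A e)].

Definition map_steps (A B : mgraph)
    (hv : 'I_(nv A) -> 'I_(nv B)) (he : 'I_(ne A) -> 'I_(ne B)) (s : steps A) : steps B :=
  map (fun p => (he p.1, hv p.2)) s.

Lemma map_snd_steps (A B : mgraph)
    (hv : 'I_(nv A) -> 'I_(nv B)) (he : 'I_(ne A) -> 'I_(ne B)) s :
  map snd (map_steps hv he s) = map hv (map snd s).
Proof. by rewrite /map_steps -!map_comp. Qed.

Section Embedding.
Variables (A B : mgraph) (hv : 'I_(nv A) -> 'I_(nv B)) (he : 'I_(ne A) -> 'I_(ne B)).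
Hypothesis hemb : embedding hv he.

Lemma walk_emb x s : walk (hv x) (map_steps hv he s) = walk x s.
Proof.
case: hemb => hv_inj _ he_ends.
elim: s x => //= -[e w] s IH x /=.
by rewrite IH he_ends -[(hv x, hv w)]/(mapp hv (x, w)) same_ends_inj.
Qed.

Lemma path_emb x s : is_path (hv x) (map_steps hv he s) = is_path x s.
Proof.
case: hemb => hv_inj _ _.
by rewrite /is_path walk_emb map_snd_steps -(map_cons hv) (map_inj_uniq hv_inj).
Qed.

Lemma endp_emb x s : endp (hv x) (map_steps hv he s) = hv (endp x s).
Proof. by rewrite /endp map_snd_steps last_map. Qed.

Lemma map_steps_inj : injective (map_steps hv he).
Proof.
case: hemb => hv_inj he_inj _.
by apply: inj_map => -[e w] [e' w'] [] /he_inj -> /hv_inj ->.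
Qed.

Lemma usp_emb x s : is_usp (hv x) (map_steps hv he s) -> is_usp x s.
Proof.
case=> s_path [s_min s_uniq]; rewrite path_emb in s_path.
split=> //; split=> s' s'_path s'_end.
  rewrite -(size_map (fun p => (he p.1, hv p.2)) s) -(size_map (fun p => (he p.1, hv p.2)) s').
  by apply: s_min; rewrite ?path_emb // !endp_emb s'_end.
move=> s'_size; apply: map_steps_inj; apply: s_uniq; rewrite ?path_emb ?endp_emb ?s'_end //.
by rewrite /map_steps !size_map.
Qed.
End Embedding.

(** * Minors and the spectator floor *)

Lemma minor_trans A B C : minor A B -> minor B C -> minor A C.
Proof. by elim=> // G K H st _ IH /IH; apply: minor_cons st. Qed.

Lemma minor_of_step A B : minor_step A B -> minor A B.
Proof. by move=> st; apply: minor_cons st (minor_refl _). Qed.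

Lemma ord_gt0 n (i : 'I_n) : 0 < n.
Proof. exact: leq_ltn_trans (leq0n i) (ltn_ord i). Qed.

Lemma minor_step_nv_gt0 A B : minor_step A B -> 0 < nv B.
Proof.
case=> /andP [nvA_gt0 _]; pose x := Ordinal nvA_gt0.
case=> [[f _] | [[v _] | [[_ [f _]] | [_ [_ [f [g [f_surj _]]]]]]]].
- exact: ord_gt0 (f x).
- exact: ord_gt0 v.
- exact: ord_gt0 (f x).
- by case: (f_surj x) => y _; exact: ord_gt0 y.
Qed.

Lemma minor_nv_gt0 G H : minor G H -> 0 < nv G -> 0 < nv H.
Proof. by elim=> // {}G K {}H st _ IH _; apply: IH; apply: minor_step_nv_gt0 st. Qed.

Lemma wf_iso G H : iso G H -> wf H -> wf G.
Proof.
case=> f [g [[f' fK _] [_ f_ends]]] /andP [nvH_gt0 /forallP H_loopless].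
apply/andP; split; first exact: ord_gt0 (f' (Ordinal nvH_gt0)).
apply/forallP => e; apply/negP => /eqP ends_eq.
move: (f_ends e) (H_loopless (g e)); rewrite /mapp.
by case: (ends G e) ends_eq => c d /= -> /same_endsP [] ->; rewrite eqxx.
Qed.

Lemma iso_step G H : iso G H -> wf H -> minor_step G H.
Proof. by move=> GH wH; split; [exact: wf_iso GH wH | left]. Qed.

Lemma iso_sym A B : iso A B -> iso B A.
Proof.
case=> f [g [[f' fK f'K] [[g' gK g'K] g_ends]]].
exists f', g'; split; [by exists f | split; first by exists g].
move=> e; have := same_ends_map f' (g_ends (g' e)); rewrite g'K same_endsC.
by case: (ends A (g' e)) => a c; rewrite /mapp /= !fK.
Qed.

Lemma spfloor_le_sp G : spfloor G <= sp G.
Proof.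
apply: (big_ind (fun y => y <= sp G)) => // [a b a_le _ | i _].
  by rewrite geq_min a_le.
by rewrite -ltnS.
Qed.

Lemma spfloor_le G H : wf H -> minor G H -> spfloor G <= sp H.
Proof.
move=> wH mGH; case: (leqP (sp H) (sp G)) => [spH_le | spG_lt].
  have k_lt : sp H < (sp G).+1 by [].
  apply: (@bigmin_le _ _ _ (fun k : 'I__ => nat_of_ord k) _ (Ordinal k_lt)).
    exact: mem_index_enum.
  by apply/pboolP; exists H.
exact: leq_trans (spfloor_le_sp G) (ltnW spG_lt).
Qed.

Lemma spfloor_attained G : wf G -> exists H, wf H /\ minor G H /\ sp H = spfloor G.
Proof.
move=> wG; apply: (big_ind (fun y => exists H, wf H /\ minor G H /\ sp H = y)).
- by exists G; do !split=> //; exact: minor_refl.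
- by move=> a b Ha Hb; rewrite /minn; case: ltnP.
- by move=> i /pboolP.
Qed.

(** * Subgraphs *)

Definition inside G (S : {set 'I_(nv G)}) (e : 'I_(ne G)) :=
  ((ends G e).1 \in S) && ((ends G e).2 \in S).

Section Subgraph.
Variables (G : mgraph) (S : {set 'I_(nv G)}) (E : {set 'I_(ne G)}).

Definition subvert := {x : 'I_(nv G) | x \in S}.
Definition subedge := {e : 'I_(ne G) | (e \in E) && inside S e}.

Lemma subedge_end1 (e : subedge) : (ends G (val e)).1 \in S.
Proof. by case/andP: (valP e) => _ /andP []. Qed.

Lemma subedge_end2 (e : subedge) : (ends G (val e)).2 \in S.
Proof. by case/andP: (valP e) => _ /andP []. Qed.

Definition sub_ends (e : subedge) : subvert * subvert :=
  (exist (fun x => x \in S) _ (subedge_end1 e), exist (fun x => x \in S) _ (subedge_end2 e)).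

Definition sub : mgraph :=
  @MGraph #|{: subvert}| #|{: subedge}| (fun e => mapp (@enum_rank _) (sub_ends (enum_val e))).

Definition subv (x : 'I_(nv sub)) : 'I_(nv G) := val (enum_val x : subvert).
Definition sube (e : 'I_(ne sub)) : 'I_(ne G) := val (enum_val e : subedge).

Lemma ends_sub e : mapp subv (ends sub e) = ends G (sube e).
Proof.
by rewrite /subv /sube /= /mapp /= !enum_rankK /=; case: (ends G _).
Qed.

Lemma subv_inj : injective subv.
Proof. by move=> x y /val_inj /enum_val_inj. Qed.

Lemma sube_inj : injective sube.
Proof. by move=> x y /val_inj /enum_val_inj. Qed.

Lemma embedding_sub : embedding subv sube.
Proof. by split; [exact: subv_inj | exact: sube_inj | move=> e; rewrite ends_sub]. Qed.

Lemma subvS x : subv x \in S.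
Proof. exact: (valP (enum_val x : subvert)). Qed.

Lemma subeE e : (sube e \in E) && inside S (sube e).
Proof. exact: (valP (enum_val e : subedge)). Qed.

Lemma subvP y : y \in S -> exists x : 'I_(nv sub), subv x = y.
Proof. by move=> y_S; exists (enum_rank (exist _ y y_S)); rewrite /subv enum_rankK. Qed.

Lemma subeP f : f \in E -> inside S f -> exists e : 'I_(ne sub), sube e = f.
Proof.
move=> f_E f_in; have f_sub : (f \in E) && inside S f by rewrite f_E f_in.
by exists (enum_rank (exist _ f f_sub)); rewrite /sube enum_rankK.
Qed.

Lemma nv_sub : nv sub = #|S|.
Proof. by rewrite /= card_sig. Qed.

Lemma wf_sub : wf G -> S != set0 -> wf sub.
Proof.
case/andP=> _ /forallP G_loopless S_n0; apply/andP; split; first by rewrite nv_sub card_gt0.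
apply/forallP => e; apply/negP => /eqP e_loop.
have := G_loopless (sube e); rewrite -ends_sub.
by case: (ends sub e) e_loop => a b /= ->; rewrite eqxx.
Qed.
End Subgraph.

Arguments sub : clear implicits.
Arguments subv {G S E}.
Arguments sube {G S E}.
Arguments subv_inj {G S E}.
Arguments sube_inj {G S E}.

Lemma inside_map A B (SA : {set 'I_(nv A)}) (SB : {set 'I_(nv B)})
    (f : 'I_(nv A) -> 'I_(nv B)) ea eb :
  same_ends (ends B eb) (mapp f (ends A ea)) -> inside SA ea ->
  (forall x, x \in SA -> f x \in SB) -> inside SB eb.
Proof.
rewrite /inside; case: (ends A ea) (ends B eb) => a b [c d] /=.
by case/same_endsP => [] [-> ->] /andP [a_S b_S] f_S; rewrite !f_S.
Qed.

Lemma inside_comap A B (SA : {set 'I_(nv A)}) (SB : {set 'I_(nv B)})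
    (f : 'I_(nv A) -> 'I_(nv B)) ea eb :
  same_ends (ends B eb) (mapp f (ends A ea)) -> inside SB eb ->
  (forall x, f x \in SB -> x \in SA) -> inside SA ea.
Proof.
rewrite /inside; case: (ends A ea) (ends B eb) => a b [c d] /=.
by case/same_endsP => [] [-> ->] /andP [a_S b_S] f_S; rewrite !f_S.
Qed.

Section SubgraphMaps.
Variables (G1 G2 : mgraph) (S1 : {set 'I_(nv G1)}) (E1 : {set 'I_(ne G1)}).
Variables (S2 : {set 'I_(nv G2)}) (E2 : {set 'I_(ne G2)}).

Lemma sub_vmap (h : 'I_(nv G1) -> 'I_(nv G2)) : (forall x, x \in S1 -> h x \in S2) ->
  exists h' : 'I_(nv (sub G1 S1 E1)) -> 'I_(nv (sub G2 S2 E2)),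
    forall x, subv (h' x) = h (subv x).
Proof.
move=> h_S; exists (fun x => enum_rank (exist _ (h (subv x)) (h_S _ (subvS x)))) => x.
by rewrite /subv /= enum_rankK.
Qed.

Lemma sub_emap (h : 'I_(ne G1) -> 'I_(ne G2)) :
  (forall e, (e \in E1) && inside S1 e -> (h e \in E2) && inside S2 (h e)) ->
  exists h' : 'I_(ne (sub G1 S1 E1)) -> 'I_(ne (sub G2 S2 E2)),
    forall e, sube (h' e) = h (sube e).
Proof.
move=> h_E; exists (fun e => enum_rank (exist _ (h (sube e)) (h_E _ (subeE e)))) => e.
by rewrite /sube /= enum_rankK.
Qed.

Lemma sub_vmap_onto h h' : (forall x, subv (h' x) = h (subv x)) ->
  forall y : 'I_(nv (sub G2 S2 E2)), (exists2 x, x \in S1 & h x = subv y) ->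
  exists x : 'I_(nv (sub G1 S1 E1)), h' x = y.
Proof.
move=> h'E y [x x_S hx]; have [x' x'E] := subvP E1 x_S.
by exists x'; apply: subv_inj; rewrite h'E x'E.
Qed.

Lemma sub_emap_onto h h' : (forall e, sube (h' e) = h (sube e)) ->
  forall f : 'I_(ne (sub G2 S2 E2)), (exists2 e, (e \in E1) && inside S1 e & h e = sube f) ->
  exists e : 'I_(ne (sub G1 S1 E1)), h' e = f.
Proof.
move=> h'E f [e /andP [e_E e_in] he]; have [e' e'E] := subeP e_E e_in.
by exists e'; apply: sube_inj; rewrite h'E e'E.
Qed.

Lemma sub_ends_map (f : 'I_(nv G2) -> 'I_(nv G1)) f' a b :
  (forall x, subv (f' x) = f (subv x)) ->
  same_ends (ends G1 (sube a)) (mapp f (ends G2 (sube b))) ->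
  same_ends (ends (sub G1 S1 E1) a) (mapp f' (ends (sub G2 S2 E2) b)).
Proof.
move=> f'E ab; rewrite -(same_ends_inj _ _ subv_inj) ends_sub.
suff -> : mapp subv (mapp f' (ends (sub G2 S2 E2) b)) = mapp f (ends G2 (sube b)) by [].
by rewrite -ends_sub; case: (ends _ b) => x y; rewrite /mapp /= !f'E.
Qed.
End SubgraphMaps.

Section SubgraphMinors.
Variables (G : mgraph) (wG : wf G).

Lemma minor_step_sub_delv (S : {set 'I_(nv G)}) (F : {set 'I_(ne G)}) v :
  v \in S -> S :\ v != set0 -> {in F, forall e, inside (S :\ v) e} ->
  minor_step (sub G (S :\ v) F) (sub G S F).
Proof.
move=> v_S Sv_n0 F_in; split; first exact: wf_sub.
right; left; have [v' v'E] := subvP F v_S; exists v'; split.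
  move=> e; have := F_in _ (proj1 (andP (subeE e))); rewrite /inside -ends_sub.
  case: (ends (sub G S F) e) => a b /=; rewrite !inE -v'E !(inj_eq subv_inj).
  by case/andP => /andP [a_v _] /andP [b_v _]; rewrite !(eq_sym v').
have [f fE] := @sub_vmap G G (S :\ v) F S F id (fun x => subsetP (subD1set S v) x).
have F_in_S e : (e \in F) && inside (S :\ v) e -> (e \in F) && inside S e.
  by rewrite /inside !inE => /and3P [-> /andP [_ ->] /andP [_ ->]].
have [g gE] := @sub_emap G G (S :\ v) F S F id F_in_S.
exists f, g; split; [|split; [|split; [|split]]].
- exact: (comm_inj (h := id) fE subv_inj (@inj_id _)).
- move=> y; apply/eqP => /(congr1 subv); rewrite fE v'E => fy_v.
  by have := subvS y; rewrite fy_v !inE eqxx.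
- move=> x x_v; apply: (sub_vmap_onto (h := id) fE); exists (subv x) => //.
  by rewrite !inE subvS andbT -v'E (inj_eq subv_inj).
- apply: inj_surj_bij; first exact: (comm_inj (h := id) gE sube_inj (@inj_id _)).
  move=> e; apply: (sub_emap_onto (h := id) gE); exists (sube e) => //.
  by have /andP [e_F _] := subeE e; rewrite e_F F_in.
- by move=> e; apply: (sub_ends_map (f := id) fE); rewrite gE mapp_id; exact: same_ends_refl.
Qed.

Lemma minor_step_sub_dele (S : {set 'I_(nv G)}) (F : {set 'I_(ne G)}) e0 :
  S != set0 -> e0 \in F -> inside S e0 ->
  minor_step (sub G S (F :\ e0)) (sub G S F).
Proof.
move=> S_n0 e0_F e0_in; split; first exact: wf_sub.
right; right; left; have [e0' e0'E] := subeP e0_F e0_in; exists e0'.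
have [f fE] := @sub_vmap G G S (F :\ e0) S F id (fun x x_S => x_S).
have [g gE] := @sub_emap G G S (F :\ e0) S F id
  (fun e => ltac:(by rewrite !inE => /andP [/andP [_ ->]])).
exists f, g; split; [|split; [|split; [|split]]].
- apply: inj_surj_bij; first exact: (comm_inj (h := id) fE subv_inj (@inj_id _)).
  by move=> y; apply: (sub_vmap_onto (h := id) fE); exists (subv y); rewrite ?subvS.
- exact: (comm_inj (h := id) gE sube_inj (@inj_id _)).
- move=> e; apply/eqP => /(congr1 sube); rewrite gE e0'E => e_e0.
  by have := subeE e; rewrite e_e0 !inE eqxx.
- move=> e e_e0; apply: (sub_emap_onto (h := id) gE); exists (sube e) => //.
  have /andP [e_F e_in] := subeE e.
  by rewrite !inE e_F e_in -e0'E (inj_eq sube_inj) e_e0.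
- by move=> e; apply: (sub_ends_map (f := id) fE); rewrite gE mapp_id; exact: same_ends_refl.
Qed.

Lemma sub_minor_vertices (S S' : {set 'I_(nv G)}) (F : {set 'I_(ne G)}) :
  S != set0 -> {in F, forall e, inside S e} -> S \subset S' ->
  minor (sub G S F) (sub G S' F).
Proof.
move=> S_n0 F_in; have [n] := ubnP #|S' :\: S|; elim: n S' => // n IH S' S'_lt S_S'.
have [S'_S | /subsetPn [v v_S' v_S]] := boolP (S' \subset S).
  have -> : S' = S by apply/eqP; rewrite eqEsubset S'_S S_S'.
  exact: minor_refl.
have S_S'v : S \subset S' :\ v.
  by apply/subsetP => x x_S; rewrite !inE (subsetP S_S') // andbT; apply: contraNneq v_S => <-.
have card_lt : #|S' :\ v :\: S| < #|S' :\: S|.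
  apply: proper_card; apply/properP; split.
    by apply/subsetP => x; rewrite !inE => /andP [-> /andP [_ ->]].
  by exists v; rewrite !inE ?eqxx // v_S v_S'.
apply: minor_trans (IH (S' :\ v) (leq_trans card_lt S'_lt) S_S'v) _.
apply/minor_of_step/minor_step_sub_delv => //.
- apply/set0Pn; case/set0Pn: S_n0 => x x_S; exists x; exact: (subsetP S_S'v).
- by move=> e /F_in; rewrite /inside => /andP [e1 e2]; rewrite !(subsetP S_S'v).
Qed.

Lemma sub_minor_edges (S : {set 'I_(nv G)}) (F F' : {set 'I_(ne G)}) :
  S != set0 -> {in F', forall e, inside S e} -> F \subset F' ->
  minor (sub G S F) (sub G S F').
Proof.
move=> S_n0 F'_in; have [n] := ubnP #|F' :\: F|; elim: n F' F'_in => // n IH F' F'_in F'_lt F_F'.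
have [F'_F | /subsetPn [e0 e0_F' e0_F]] := boolP (F' \subset F).
  have -> : F' = F by apply/eqP; rewrite eqEsubset F'_F F_F'.
  exact: minor_refl.
have F_F'e : F \subset F' :\ e0.
  by apply/subsetP => x x_F; rewrite !inE (subsetP F_F') // andbT; apply: contraNneq e0_F => <-.
have card_lt : #|F' :\ e0 :\: F| < #|F' :\: F|.
  apply: proper_card; apply/properP; split.
    by apply/subsetP => x; rewrite !inE => /andP [-> /andP [_ ->]].
  by exists e0; rewrite !inE ?eqxx // e0_F e0_F'.
have F'e_in : {in F' :\ e0, forall e, inside S e} by move=> e; rewrite inE => /andP [_ /F'_in].
apply: minor_trans (IH (F' :\ e0) F'e_in (leq_trans card_lt F'_lt) F_F'e) _.
exact/minor_of_step/minor_step_sub_dele/F'_in.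
Qed.
End SubgraphMinors.

Definition within G (S : {set 'I_(nv G)}) := [set e | inside S e].
Definition induced G (S : {set 'I_(nv G)}) := sub G S (within S).
Arguments induced : clear implicits.

Lemma inside_within G (S : {set 'I_(nv G)}) e : (e \in within S) && inside S e = inside S e.
Proof. by rewrite inE andbb. Qed.

Lemma inside_sube G (S : {set 'I_(nv G)}) (e : 'I_(ne (induced G S))) : inside S (sube e).
Proof. by have := subeE e; rewrite inside_within. Qed.

Lemma subeP_induced G (S : {set 'I_(nv G)}) f :
  inside S f -> exists e : 'I_(ne (induced G S)), sube e = f.
Proof. by move=> f_in; apply: subeP; rewrite // inE. Qed.

Lemma induced_minor G (S S' : {set 'I_(nv G)}) :
  wf G -> S != set0 -> S \subset S' -> minor (induced G S) (induced G S').
Proof.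
rewrite /induced => wG S_n0 S_S'.
have within_in (T : {set 'I_(nv G)}) : {in within T, forall e, inside T e} by move=> e; rewrite inE.
have S'_n0 : S' != set0.
  by apply/set0Pn; case/set0Pn: S_n0 => x /(subsetP S_S') x_S'; exists x.
have within_S_S' : within S \subset within S'.
  by apply/subsetP => e; rewrite !inE /inside => /andP [e1 e2]; rewrite !(subsetP S_S').
apply: minor_trans (sub_minor_vertices wG S_n0 (within_in S) S_S') _.
exact (sub_minor_edges wG S'_n0 (within_in S') within_S_S').
Qed.

Lemma lift_walk_induced H (S : {set 'I_(nv H)}) (x : 'I_(nv (induced H S))) s :
  walk (subv x) s -> {subset map snd s <= S} ->
  exists s' : steps (induced H S), map_steps subv sube s' = s.
Proof.
elim: s x => [|[e w] s IH] x /=; first by exists [::].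
case/andP=> e_ends s_walk s_S; have w_S : w \in S by apply: s_S; exact: mem_head.
have [w' w'E] := subvP (within S) w_S.
have e_in : inside S e.
  by rewrite /inside; case/same_endsP: e_ends => ->; rewrite /= ?subvS w_S.
have [e' e'E] := subeP_induced e_in.
have [s' s'E] : exists s' : steps (induced H S), map_steps subv sube s' = s.
  by apply: (IH w'); rewrite ?w'E // => v v_s; apply: s_S; rewrite inE v_s orbT.
by exists ((e', w') :: s'); rewrite /= e'E w'E s'E.
Qed.

Lemma usp_induced H (S : {set 'I_(nv H)}) x s :
  is_usp x s -> {subset x :: map snd s <= S} -> (size s).+1 <= usp (induced H S).
Proof.
move=> s_usp s_S; have [x' x'E] := subvP (within S) (s_S x (mem_head _ _)).
have [s' s'E] : exists s' : steps (induced H S), map_steps subv sube s' = s.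
  apply: (@lift_walk_induced H S x'); first by rewrite x'E; case/andP: (proj1 s_usp).
  by move=> v v_s; apply: s_S; rewrite inE v_s orbT.
have s'_usp : is_usp x' s' by apply: (usp_emb (embedding_sub _ _)); rewrite s'E x'E.
by have := usp_ge_path s'_usp; rewrite -s'E /map_steps size_map.
Qed.

Lemma spfloor_le_induced A H (T : {set 'I_(nv H)}) x s :
  wf H -> minor A (induced H T) -> is_usp x s -> {subset x :: map snd s <= T} ->
  spfloor A <= #|T| - (size s).+1.
Proof.
move=> wH A_T s_usp s_T.
have T_n0 : T != set0 by apply/set0Pn; exists x; apply: s_T; exact: mem_head.
apply: leq_trans (spfloor_le (wf_sub _ wH T_n0) A_T) _.
by rewrite /sp nv_sub leq_sub2l // (usp_induced s_usp s_T).
Qed.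

(** * Colour classes along a minor sequence *)

Definition fiber G (nu : 'I_(nv G) -> bool) b := [set x | nu x == b].

Lemma wf_fiber G (nu : 'I_(nv G) -> bool) b :
  wf G -> (exists x, nu x = b) -> wf (induced G (fiber nu b)).
Proof. by move=> wG [x nux]; apply: wf_sub wG _; apply/set0Pn; exists x; rewrite inE nux. Qed.

Section InducedMaps.
Variables (G K : mgraph) (S : {set 'I_(nv G)}) (T : {set 'I_(nv K)}).
Variables (f : 'I_(nv G) -> 'I_(nv K)) (g : 'I_(ne G) -> 'I_(ne K)).
Hypothesis f_T : forall x, (f x \in T) = (x \in S).
Hypothesis g_ends : forall e, same_ends (ends K (g e)) (mapp f (ends G e)).

Lemma induced_maps : exists f' g',
  [/\ forall x, subv (f' x) = f (subv x), forall e, sube (g' e) = g (sube e)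
    & forall e, same_ends (ends (induced K T) (g' e)) (mapp f' (ends (induced G S) e))].
Proof.
have f_S x : x \in S -> f x \in T by rewrite f_T.
have [f' f'E] := @sub_vmap G K S (within S) T (within T) f f_S.
have g_in e : (e \in within S) && inside S e -> (g e \in within T) && inside T (g e).
  by rewrite !inside_within => e_in; apply: inside_map (g_ends e) e_in f_S.
have [g' g'E] := sub_emap g_in.
by exists f', g'; split=> // e; apply: (sub_ends_map f'E); rewrite g'E; exact: g_ends.
Qed.

Lemma induced_vmap_onto (f' : 'I_(nv (induced G S)) -> 'I_(nv (induced K T))) :
  (forall x, subv (f' x) = f (subv x)) ->
  forall y, (exists x, f x = subv y) -> exists x, f' x = y.
Proof.
move=> f'E y [x fx]; apply: (sub_vmap_onto f'E); exists x => //.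
by rewrite -f_T fx subvS.
Qed.

Lemma induced_emap_onto (g' : 'I_(ne (induced G S)) -> 'I_(ne (induced K T))) :
  (forall e, sube (g' e) = g (sube e)) ->
  forall e', (exists e, g e = sube e') -> exists e, g' e = e'.
Proof.
move=> g'E e' [e ge]; apply: (sub_emap_onto g'E); exists e => //.
rewrite inside_within; apply: (inside_comap (SB := T) (g_ends e)); first by rewrite ge inside_sube.
by move=> x; rewrite f_T.
Qed.

Lemma induced_iso : injective f -> (forall y, y \in T -> exists x, f x = y) ->
  injective g -> (forall e', inside T e' -> exists e, g e = e') ->
  iso (induced G S) (induced K T).
Proof.
move=> f_inj f_onto g_inj g_onto; have [f' [g' [f'E g'E ends']]] := induced_maps.
exists f', g'; split; [|split=> //].
- apply: inj_surj_bij; first exact: comm_inj f'E subv_inj f_inj.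
  by move=> y; apply: (induced_vmap_onto f'E); apply: f_onto; exact: subvS.
- apply: inj_surj_bij; first exact: comm_inj g'E sube_inj g_inj.
  by move=> e'; apply: (induced_emap_onto g'E); apply: g_onto; exact: inside_sube.
Qed.
End InducedMaps.

Section FiberSteps.
Variables (G K : mgraph) (nu : 'I_(nv G) -> bool).
Hypothesis wG : wf G.

Definition fibers_step := exists mu : 'I_(nv K) -> bool, forall b, (exists x, nu x = b) ->
  minor_step (induced G (fiber nu b)) (induced K (fiber mu b)).

Lemma iso_fibers_step : iso G K -> fibers_step.
Proof.
case=> f [g [[finv fK finvK] [g_bij g_ends]]].
exists (nu \o finv) => b nu_b; split; first exact: wf_fiber.
have f_T x : (f x \in fiber (nu \o finv) b) = (x \in fiber nu b) by rewrite !inE /= fK.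
left; apply: (induced_iso f_T g_ends (can_inj fK) _ (bij_inj g_bij)).
  by move=> y _; exists (finv y); rewrite finvK.
by move=> e' _; apply: bij_surj.
Qed.

Lemma del_vertex_fibers_step : del_vertex G K -> fibers_step.
Proof.
case=> v [v_isolated [f [g [f_inj [f_v [f_onto [g_bij g_ends]]]]]]].
pose mu y := pbool (exists2 x, f x = y & nu x).
have muf x : mu (f x) = nu x.
  by apply/pboolP/idP => [[x' /f_inj <-] // | nux]; exists x.
exists mu => b nu_b; split; first exact: wf_fiber.
have f_T x : (f x \in fiber mu b) = (x \in fiber nu b) by rewrite !inE muf.
have [f' [g' [f'E g'E ends']]] := induced_maps f_T g_ends.
have f'_inj := comm_inj f'E subv_inj f_inj.
have f'_onto y : subv y != v -> exists x, f' x = y.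
  by move=> /f_onto; apply: (induced_vmap_onto f_T f'E).
have g'_bij : bijective g'.
  apply: inj_surj_bij; first exact: comm_inj g'E sube_inj (bij_inj g_bij).
  by move=> e'; apply: (induced_emap_onto f_T g_ends g'E); apply: bij_surj.
have [v_b | v_nb] := boolP (mu v == b).
- right; left; have [v' v'E] : exists v' : 'I_(nv (induced K (fiber mu b))), subv v' = v.
    by apply: subvP; rewrite inE.
  exists v'; split.
    move=> e; have [] := v_isolated (sube e); rewrite -ends_sub -v'E.
    by case: (ends _ e) => a c /=; rewrite !(inj_eq subv_inj).
  exists f', g'; split=> //; split; last split=> //.
    by move=> y; rewrite -(inj_eq subv_inj) f'E v'E f_v.
  by move=> x x_v; apply: f'_onto; rewrite -v'E (inj_eq subv_inj).
- left; exists f', g'; split=> //; apply: inj_surj_bij f'_inj _ => y; apply: f'_onto.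
  by apply: contraNneq v_nb => <-; have := subvS y; rewrite inE.
Qed.

Lemma del_edge_fibers_step : del_edge G K -> fibers_step.
Proof.
case=> e0 [f [g [[finv fK finvK] [g_inj [g_e0 [g_onto g_ends]]]]]].
exists (nu \o finv) => b nu_b; split; first exact: wf_fiber.
set T := fiber (nu \o finv) b.
have f_T x : (f x \in T) = (x \in fiber nu b) by rewrite !inE /= fK.
have [f' [g' [f'E g'E ends']]] := induced_maps f_T g_ends.
have f'_bij : bijective f'.
  apply: inj_surj_bij; first exact: comm_inj f'E subv_inj (can_inj fK).
  by move=> y; apply: (induced_vmap_onto f_T f'E); exists (finv (subv y)); rewrite finvK.
have g'_inj := comm_inj g'E sube_inj g_inj.
have g'_onto e' : sube e' != e0 -> exists e, g' e = e'.
  by move=> /g_onto; apply: (induced_emap_onto f_T g_ends g'E).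
have [e0_in | e0_out] := boolP (inside T e0).
- right; right; left; have [e0' e0'E] := subeP_induced e0_in.
  exists e0', f', g'; split=> //; split=> //; split; last split=> //.
    by move=> e; rewrite -(inj_eq sube_inj) g'E e0'E g_e0.
  by move=> e' e'_e0; apply: g'_onto; rewrite -e0'E (inj_eq sube_inj).
- left; exists f', g'; split=> //; split=> //.
  apply: inj_surj_bij g'_inj _ => e'; apply: g'_onto.
  by apply: contraNneq e0_out => <-; exact: inside_sube.
Qed.

Section ContractionMaps.
Variables (e0 : 'I_(ne K)) (f : 'I_(nv K) -> 'I_(nv G)) (g : 'I_(ne G) -> 'I_(ne K)) (b : bool).
Hypothesis f_onto : forall x, exists y, f y = x.
Hypothesis g_onto : forall e', e' != e0 -> exists e, g e = e'.
Hypothesis g_ends : forall e, same_ends (ends G e) (mapp f (ends K (g e))).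

Lemma contraction_fiber_maps :
  let S := fiber nu b in let T := fiber (nu \o f) b in
  exists (f' : 'I_(nv (induced K T)) -> 'I_(nv (induced G S)))
         (g' : 'I_(ne (induced G S)) -> 'I_(ne (induced K T))),
  [/\ forall y, subv (f' y) = f (subv y), forall x, exists y, f' y = x,
      forall e, sube (g' e) = g (sube e), forall e', sube e' != e0 -> exists e, g' e = e'
    & forall e, same_ends (ends (induced G S) e) (mapp f' (ends (induced K T) (g' e)))].
Proof.
move=> S T; have f_S y : (f y \in S) = (y \in T) by rewrite !inE.
have [f' f'E] := @sub_vmap K G T (within T) S (within S) f (fun y => ltac:(by rewrite f_S)).
have g_in e : (e \in within S) && inside S e -> (g e \in within T) && inside T (g e).
  rewrite !inside_within => e_in; apply: (inside_comap (SB := S) (g_ends e)) => // y.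
  by rewrite f_S.
have [g' g'E] := sub_emap g_in.
exists f', g'; split=> //.
- move=> x; have [y fy] := f_onto (subv x); apply: (sub_vmap_onto f'E); exists y => //.
  by rewrite -f_S fy subvS.
- move=> e' /g_onto [e ge]; apply: (sub_emap_onto g'E); exists e => //.
  rewrite inside_within; apply: (inside_map (SA := T) (g_ends e)); first by rewrite ge inside_sube.
  by move=> y; rewrite f_S.
- by move=> e; apply: (sub_ends_map f'E); rewrite g'E.
Qed.
End ContractionMaps.

Lemma contract_fibers_step : contract G K -> fibers_step.
Proof.
case=> e0 [no_parallel [f [g [f_onto [f_eq [g_inj [g_e0 [g_onto g_ends]]]]]]]].
exists (nu \o f) => b nu_b; split; first exact: wf_fiber.
have [f' [g' [f'E f'_onto g'E g'_onto ends']]] :=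
  contraction_fiber_maps b f_onto g_onto g_ends.
set T := fiber (nu \o f) b in f' g' f'E f'_onto g'E g'_onto ends' *.
have g'_inj := comm_inj g'E sube_inj g_inj.
have f'_eq x y : f' x = f' y <-> f (subv x) = f (subv y).
  by rewrite -!f'E; split=> [-> | /subv_inj].
have [e0_in | e0_out] := boolP (inside T e0).
- right; right; right; have [e0' e0'E] := subeP_induced e0_in.
  have ends_e0' x y :
      same_ends (x, y) (ends (induced K T) e0') = same_ends (subv x, subv y) (ends K e0).
    by rewrite -(same_ends_inj _ _ subv_inj) ends_sub e0'E.
  exists e0'; split.
    move=> e e_e0; rewrite -(same_ends_inj _ _ subv_inj) !ends_sub e0'E; apply: no_parallel.
    by rewrite -e0'E (inj_eq sube_inj).
  exists f', g'; split=> //; split; last split=> //; last split; last split=> //.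
  + move=> x y; rewrite ends_e0'; split.
      by move=> /f'_eq /f_eq [/subv_inj -> | e0xy]; [left | right].
    by move=> xy; apply/f'_eq/f_eq; case: xy => [-> | e0xy]; [left | right].
  + by move=> e; rewrite -(inj_eq sube_inj) g'E e0'E g_e0.
  + by move=> e' e'_e0; apply: g'_onto; rewrite -e0'E (inj_eq sube_inj).
- left; have f'_inj : injective f'.
    move=> x y /f'_eq /f_eq [/subv_inj // | e0xy]; case/negP: e0_out.
    move: e0xy (subvS x) (subvS y); rewrite /inside.
    by case: (ends K e0) => a c /same_endsP [] [-> ->] /= -> ->.
  have [h f'K hK] := inj_surj_bij f'_inj f'_onto.
  exists h, g'; split; first by exists f'.
  split.
    apply: inj_surj_bij g'_inj _ => e'; apply: g'_onto.
    by apply: contraNneq e0_out => <-; exact: inside_sube.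
  move=> e; rewrite same_endsC; have := same_ends_map h (ends' e).
  by case: (ends _ (g' e)) => a c; rewrite /mapp /= !f'K.
Qed.

End FiberSteps.

Lemma minor_step_fibers G K (nu : 'I_(nv G) -> bool) : minor_step G K -> fibers_step K nu.
Proof.
case=> wG [|[|[|]]]; [exact: iso_fibers_step | exact: del_vertex_fibers_step
                     | exact: del_edge_fibers_step | exact: contract_fibers_step].
Qed.

Lemma minor_fibers G H : minor G H -> forall nu : 'I_(nv G) -> bool,
  exists mu : 'I_(nv H) -> bool, forall b, (exists x, nu x = b) ->
    minor (induced G (fiber nu b)) (induced H (fiber mu b)).
Proof.
elim=> [{}H | {}G K {}H st _ IH] nu; first by exists nu => b _; exact: minor_refl.
have [muK stK] := minor_step_fibers nu st; have [mu minorK] := IH muK.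
exists mu => b nu_b; have st_b := stK b nu_b.
have muK_b : exists y, muK y = b.
  have := minor_step_nv_gt0 st_b; rewrite nv_sub card_gt0 => /set0Pn [y].
  by rewrite inE => /eqP <-; exists y.
exact: minor_cons st_b (minorK b muK_b).
Qed.

Lemma card_fibers_setU G (mu : 'I_(nv G) -> bool) (P : {set 'I_(nv G)}) :
  #|fiber mu true :|: P| + #|fiber mu false :|: P| <= nv G + #|P|.
Proof.
rewrite -cardsUI leq_add //; first exact: leq_trans (max_card _) (eq_leq (card_ord _)).
apply: subset_leq_card; apply/subsetP => v; rewrite !inE.
by case: (mu v) => /andP [/orP [] // _ /orP []].
Qed.

(** * Disjoint unions *)

Lemma split_lshift m n (i : 'I_m) : split (lshift n i) = inl i.
Proof. exact: (unsplitK (inl i)). Qed.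

Lemma split_rshift m n (i : 'I_n) : split (rshift m i) = inr i.
Proof. exact: (unsplitK (inr i)). Qed.

Lemma lrshift_neq m n (a : 'I_m) (b : 'I_n) : lshift n a <> rshift m b.
Proof. by move/eqP; rewrite eq_lrshift. Qed.

Lemma ends_dunion_l A X e :
  ends (dunion A X) (lshift (ne X) e) = mapp (@lshift (nv A) (nv X)) (ends A e).
Proof. by rewrite /= split_lshift. Qed.

Lemma ends_dunion_r A X e :
  ends (dunion A X) (rshift (ne A) e) = mapp (@rshift (nv A) (nv X)) (ends X e).
Proof. by rewrite /= split_rshift. Qed.

Lemma wf_dunion A X : wf A -> wf X -> wf (dunion A X).
Proof.
case/andP=> nvA_gt0 /forallP A_loopless /andP [_ /forallP X_loopless].
apply/andP; split; first by rewrite /= addn_gt0 nvA_gt0.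
apply/forallP => e; case: (split_ordP e) => [a -> | b ->].
- by rewrite ends_dunion_l; move: (A_loopless a); case: (ends A a) => u v /=; rewrite eq_lshift.
- by rewrite ends_dunion_r; move: (X_loopless b); case: (ends X b) => u v /=; rewrite eq_rshift.
Qed.

Lemma embedding_iso_induced A D (hv : 'I_(nv A) -> 'I_(nv D)) (he : 'I_(ne A) -> 'I_(ne D))
    (S : {set 'I_(nv D)}) :
  embedding hv he -> (forall y, (y \in S) <-> exists x, hv x = y) ->
  (forall e', inside S e' -> exists e, he e = e') -> iso A (induced D S).
Proof.
case=> hv_inj he_inj he_ends S_img he_onto.
have hv_S x : hv x \in S by apply/S_img; exists x.
have he_in e : (he e \in within S) && inside S (he e).
  by rewrite inside_within /inside he_ends /= !hv_S.
pose f x : 'I_(nv (induced D S)) := enum_rank (exist (fun y => y \in S) (hv x) (hv_S x)).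
pose g e : 'I_(ne (induced D S)) :=
  enum_rank (exist (fun e' => (e' \in within S) && inside S e') (he e) (he_in e)).
have fE x : subv (f x) = hv x by rewrite /subv enum_rankK.
have gE e : sube (g e) = he e by rewrite /sube enum_rankK.
exists f, g; split; [|split].
- apply: inj_surj_bij => [x y /(congr1 subv) | y]; first by rewrite !fE => /hv_inj.
  by have [x hx] := (S_img (subv y)).1 (subvS y); exists x; apply: subv_inj; rewrite fE.
- apply: inj_surj_bij => [e1 e2 /(congr1 sube) | e']; first by rewrite !gE => /he_inj.
  by have [e he_e] := he_onto _ (inside_sube e'); exists e; apply: sube_inj; rewrite gE.
- move=> e; rewrite -(same_ends_inj _ _ subv_inj) ends_sub gE he_ends.
  by case: (ends A e) => a b; rewrite /mapp /= !fE; exact: same_ends_refl.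
Qed.

Definition side A X (v : 'I_(nv (dunion A X))) : bool := v < nv A.

Lemma side_lshift A X (a : 'I_(nv A)) : @side A X (lshift (nv X) a).
Proof. by rewrite /side /= ltn_ord. Qed.

Lemma side_rshift A X (b : 'I_(nv X)) : @side A X (rshift (nv A) b) = false.
Proof. by rewrite /side /= ltnNge leq_addr. Qed.

Lemma iso_side_l A X : iso A (induced (dunion A X) (fiber (@side A X) true)).
Proof.
apply: (@embedding_iso_induced A (dunion A X) (@lshift (nv A) (nv X)) (@lshift (ne A) (ne X))).
- by split; [exact: lshift_inj | exact: lshift_inj | exact: ends_dunion_l].
- move=> y; rewrite inE; case: (split_ordP y) => [a -> | b ->].
    by rewrite side_lshift; split=> // _; exists a.
  by rewrite side_rshift; split=> // -[a /lrshift_neq].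
- move=> e'; case: (split_ordP e') => [a -> | b ->]; first by exists a.
  by rewrite /inside ends_dunion_r !inE /= side_rshift.
Qed.

Lemma iso_side_r A X : iso X (induced (dunion A X) (fiber (@side A X) false)).
Proof.
apply: (@embedding_iso_induced X (dunion A X) (@rshift (nv A) (nv X)) (@rshift (ne A) (ne X))).
- by split; [exact: rshift_inj | exact: rshift_inj | exact: ends_dunion_r].
- move=> y; rewrite inE; case: (split_ordP y) => [a -> | b ->].
    by rewrite side_lshift; split=> // -[b /esym /lrshift_neq].
  by rewrite side_rshift; split=> // _; exists b.
- move=> e'; case: (split_ordP e') => [a -> | b ->]; last by exists b.
  by rewrite /inside ends_dunion_l !inE /= side_lshift.
Qed.

Lemma side_onto A X : wf A -> wf X -> forall b, exists v, @side A X v = b.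
Proof.
move=> /andP [nvA_gt0 _] /andP [nvX_gt0 _] [].
  by exists (lshift (nv X) (Ordinal nvA_gt0)); rewrite side_lshift.
by exists (rshift (nv A) (Ordinal nvX_gt0)); rewrite side_rshift.
Qed.

Lemma spfloor_add_le_sp A X H : wf A -> wf X -> wf H -> minor (dunion A X) H ->
  spfloor A + spfloor X <= sp H.
Proof.
move=> wA wX wH AX_H; have wD := wf_dunion wA wX; have sides := side_onto wA wX.
have [mu mu_minor] := minor_fibers AX_H (@side A X).
have [x [s [s_usp s_size]]] := usp_attained (proj1 (andP wH)).
set P := [set v | v \in x :: map snd s].
have P_card : #|P| = (size s).+1.
  by rewrite cardsE (card_uniqP (proj2 (andP (proj1 s_usp)))) /= size_map.
have s_P b : {subset x :: map snd s <= fiber mu b :|: P}.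
  by move=> v v_s; rewrite in_setU [v \in P]inE v_s orbT.
have side_minor b :
    minor (induced (dunion A X) (fiber (@side A X) b)) (induced H (fiber mu b :|: P)).
  have mu_b := mu_minor b (sides b).
  have fiber_n0 : fiber mu b != set0.
    have := minor_nv_gt0 mu_b; rewrite !nv_sub !card_gt0; apply.
    by have [v side_v] := sides b; apply/set0Pn; exists v; rewrite inE side_v.
  exact: minor_trans mu_b (induced_minor wH fiber_n0 (subsetUl _ _)).
have side_le (B : mgraph) b : iso B (induced (dunion A X) (fiber (@side A X) b)) ->
    spfloor B <= #|fiber mu b :|: P| - (size s).+1.
  move=> B_side; apply: spfloor_le_induced wH _ s_usp (s_P b).
  exact: minor_cons (iso_step B_side (wf_fiber wD (sides b))) (side_minor b).
have := side_le A true (iso_side_l A X); have := side_le X false (iso_side_r A X).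
have := card_fibers_setU mu P; have := subset_leq_card (subsetUr (fiber mu true) P).
have := subset_leq_card (subsetUr (fiber mu false) P).
rewrite /sp -s_size P_card; lia.
Qed.

Section LeftMap.
Variables (m m' n : nat) (f : 'I_m -> 'I_m').

Definition lmap (v : 'I_(m + n)) : 'I_(m' + n) :=
  match split v with inl a => lshift n (f a) | inr b => rshift m' b end.

Lemma lmap_lshift a : lmap (lshift n a) = lshift n (f a).
Proof. by rewrite /lmap split_lshift. Qed.

Lemma lmap_rshift b : lmap (rshift m b) = rshift m' b.
Proof. by rewrite /lmap split_rshift. Qed.

Lemma mapp_lmap_lshift (p : 'I_m * 'I_m) :
  mapp lmap (mapp (lshift n) p) = mapp (lshift n) (mapp f p).
Proof. by rewrite /mapp /= !lmap_lshift. Qed.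

Lemma mapp_lmap_rshift (p : 'I_n * 'I_n) : mapp lmap (mapp (@rshift m n) p) = mapp (@rshift m' n) p.
Proof. by rewrite /mapp /= !lmap_rshift. Qed.

Lemma lmap_inj : injective f -> injective lmap.
Proof.
move=> f_inj x y; case: (split_ordP x) => [a -> | b ->]; case: (split_ordP y) => [a' -> | b' ->];
  rewrite ?lmap_lshift ?lmap_rshift.
- by move/lshift_inj/f_inj ->.
- by move/lrshift_neq.
- by move/esym/lrshift_neq.
- by move/rshift_inj ->.
Qed.

Lemma lmap_neq_lshift v : (forall a, f a != v) -> forall x, lmap x != lshift n v.
Proof.
move=> f_v x; case: (split_ordP x) => [a -> | b ->].
  by rewrite lmap_lshift eq_lshift.
by rewrite lmap_rshift eq_rlshift.
Qed.

Lemma lmap_onto_but v : (forall a', a' != v -> exists a, f a = a') ->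
  forall y, y != lshift n v -> exists x, lmap x = y.
Proof.
move=> f_onto y; case: (split_ordP y) => [a' -> | b ->] y_v.
  have [a fa] := f_onto a' (ltac:(by rewrite -(eq_lshift n))).
  by exists (lshift n a); rewrite lmap_lshift fa.
by exists (rshift m b); rewrite lmap_rshift.
Qed.

Lemma lmap_onto : (forall a', exists a, f a = a') -> forall y, exists x, lmap x = y.
Proof.
move=> f_onto y; case: (split_ordP y) => [a' -> | b ->].
  by have [a fa] := f_onto a'; exists (lshift n a); rewrite lmap_lshift fa.
by exists (rshift m b); rewrite lmap_rshift.
Qed.

Lemma lmap_bij : bijective f -> bijective lmap.
Proof.
by move=> f_bij; apply: inj_surj_bij (lmap_inj (bij_inj f_bij)) (lmap_onto (bij_surj f_bij)).
Qed.
End LeftMap.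
Arguments lmap {m m'} n f v.

Section LiftLeft.
Variables (K K' X : mgraph).

Lemma ends_dunion_lmap (f : 'I_(nv K) -> 'I_(nv K')) (g : 'I_(ne K) -> 'I_(ne K')) :
  (forall e, same_ends (ends K' (g e)) (mapp f (ends K e))) ->
  forall e, same_ends (ends (dunion K' X) (lmap (ne X) g e))
                      (mapp (lmap (nv X) f) (ends (dunion K X) e)).
Proof.
move=> g_ends e; case: (split_ordP e) => [a -> | b ->].
  by rewrite lmap_lshift !ends_dunion_l mapp_lmap_lshift same_ends_inj //; exact: lshift_inj.
by rewrite lmap_rshift !ends_dunion_r mapp_lmap_rshift same_ends_refl.
Qed.

Lemma ends_dunion_lmap_rev (f : 'I_(nv K') -> 'I_(nv K)) (g : 'I_(ne K) -> 'I_(ne K')) :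
  (forall e, same_ends (ends K e) (mapp f (ends K' (g e)))) ->
  forall e, same_ends (ends (dunion K X) e)
                      (mapp (lmap (nv X) f) (ends (dunion K' X) (lmap (ne X) g e))).
Proof.
move=> g_ends e; case: (split_ordP e) => [a -> | b ->].
  by rewrite lmap_lshift !ends_dunion_l mapp_lmap_lshift same_ends_inj //; exact: lshift_inj.
by rewrite lmap_rshift !ends_dunion_r mapp_lmap_rshift same_ends_refl.
Qed.

Lemma iso_dunion_l : iso K K' -> iso (dunion K X) (dunion K' X).
Proof.
case=> f [g [f_bij [g_bij g_ends]]]; exists (lmap (nv X) f), (lmap (ne X) g).
by split; [exact: lmap_bij | split; [exact: lmap_bij | exact: ends_dunion_lmap]].
Qed.

Lemma del_vertex_dunion_l : del_vertex K K' -> del_vertex (dunion K X) (dunion K' X).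
Proof.
case=> v [v_isolated [f [g [f_inj [f_v [f_onto [g_bij g_ends]]]]]]].
exists (lshift (nv X) v); split.
  move=> e; case: (split_ordP e) => [a -> | b ->].
    by rewrite ends_dunion_l /=; have [] := v_isolated a; rewrite !eq_lshift.
  by rewrite ends_dunion_r /= !eq_lrshift.
exists (lmap (nv X) f), (lmap (ne X) g); split; first exact: lmap_inj.
split; first exact: lmap_neq_lshift.
split; first exact: lmap_onto_but.
by split; [exact: lmap_bij | exact: ends_dunion_lmap].
Qed.

Lemma del_edge_dunion_l : del_edge K K' -> del_edge (dunion K X) (dunion K' X).
Proof.
case=> e0 [f [g [f_bij [g_inj [g_e0 [g_onto g_ends]]]]]].
exists (lshift (ne X) e0), (lmap (nv X) f), (lmap (ne X) g).
split; first exact: lmap_bij.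
split; first exact: lmap_inj.
split; first exact: lmap_neq_lshift.
by split; [exact: lmap_onto_but | exact: ends_dunion_lmap].
Qed.

Lemma same_ends_lshift_lt m n (x y : 'I_(m + n)) (p : 'I_m * 'I_m) :
  same_ends (x, y) (mapp (lshift n) p) -> (x < m) && (y < m).
Proof. by case: p => u v /same_endsE [] [-> ->]; rewrite /= !ltn_ord. Qed.

Lemma lmap_eq_contract (f : 'I_(nv K') -> 'I_(nv K)) e0 :
  (forall x y, f x = f y <-> (x = y \/ same_ends (x, y) (ends K' e0))) ->
  forall x y, lmap (nv X) f x = lmap (nv X) f y <->
    (x = y \/ same_ends (x, y) (ends (dunion K' X) (lshift (ne X) e0))).
Proof.
move=> f_eq x y; rewrite ends_dunion_l.
case: (split_ordP x) => [a -> | b ->]; case: (split_ordP y) => [a' -> | b' ->];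
  rewrite ?lmap_lshift ?lmap_rshift.
- rewrite -[(lshift _ a, _)]/(mapp (lshift (nv X)) (a, a')) same_ends_inj; last exact: lshift_inj.
  split=> [/lshift_inj /f_eq [-> | e0aa'] | [/lshift_inj -> // | e0aa']]; [by left | by right |].
  by congr lshift; apply/f_eq; right.
- split=> [/lrshift_neq | [/lrshift_neq | /same_ends_lshift_lt]] //=.
  by rewrite [_ + _ < _]ltnNge leq_addr andbF.
- split=> [/esym/lrshift_neq | [/esym/lrshift_neq | /same_ends_lshift_lt]] //=.
  by rewrite ltnNge leq_addr.
- split=> [/rshift_inj -> | [/rshift_inj -> // | /same_ends_lshift_lt]]; first by left.
  by rewrite /= ltnNge leq_addr.
Qed.

Lemma contract_dunion_l : contract K K' -> contract (dunion K X) (dunion K' X).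
Proof.
case=> e0 [no_parallel [f [g [f_onto [f_eq [g_inj [g_e0 [g_onto g_ends]]]]]]]].
exists (lshift (ne X) e0); split.
  move=> e; case: (split_ordP e) => [a -> | b ->] e_e0; rewrite !ends_dunion_l.
    rewrite same_ends_inj; last exact: lshift_inj.
    by apply: no_parallel; rewrite -(eq_lshift (ne X)).
  rewrite ends_dunion_r; case: (ends X b) => u v; apply/negP => /same_ends_lshift_lt.
  by rewrite /= ltnNge leq_addr.
exists (lmap (nv X) f), (lmap (ne X) g); split; first exact: lmap_onto.
split; first exact: lmap_eq_contract.
split; first exact: lmap_inj.
split; first exact: lmap_neq_lshift.
by split; [exact: lmap_onto_but | exact: ends_dunion_lmap_rev].
Qed.
End LiftLeft.

Lemma minor_step_dunion_l K K' X : minor_step K K' -> wf X -> minor_step (dunion K X) (dunion K' X).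
Proof.
case=> wK st wX; split; first exact: wf_dunion.
case: st => [/iso_dunion_l | [/del_vertex_dunion_l | [/del_edge_dunion_l | /contract_dunion_l]]] st;
  by [left | right; left | right; right; left | right; right; right].
Qed.

Lemma minor_dunion_l K K' X : minor K K' -> wf X -> minor (dunion K X) (dunion K' X).
Proof.
move=> KK' wX; elim: KK' => [H | G M H st _ IH]; first exact: minor_refl.
exact: minor_cons (minor_step_dunion_l st wX) IH.
Qed.

Definition swapv m n (v : 'I_(m + n)) : 'I_(n + m) :=
  match split v with inl a => rshift n a | inr b => lshift m b end.

Lemma swapv_lshift m n a : swapv (lshift n a : 'I_(m + n)) = rshift n a.
Proof. by rewrite /swapv split_lshift. Qed.

Lemma swapv_rshift m n b : swapv (rshift m b : 'I_(m + n)) = lshift m b.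
Proof. by rewrite /swapv split_rshift. Qed.

Lemma swapvK m n : cancel (@swapv m n) (@swapv n m).
Proof.
by move=> x; case: (split_ordP x) => [a -> | b ->];
  rewrite ?swapv_lshift ?swapv_rshift ?swapv_lshift.
Qed.

Lemma iso_dunionC A X : iso (dunion A X) (dunion X A).
Proof.
exists (@swapv (nv A) (nv X)), (@swapv (ne A) (ne X)).
split; first by exists (@swapv (nv X) (nv A)); apply: swapvK.
split; first by exists (@swapv (ne X) (ne A)); apply: swapvK.
move=> e; case: (split_ordP e) => [a -> | b ->].
  rewrite swapv_lshift ends_dunion_r ends_dunion_l.
  by case: (ends A a) => u v; rewrite /mapp /= !swapv_lshift same_ends_refl.
rewrite swapv_rshift ends_dunion_l ends_dunion_r.
by case: (ends X b) => u v; rewrite /mapp /= !swapv_rshift same_ends_refl.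
Qed.

Lemma minor_dunion G1 G2 H1 H2 : wf G2 -> wf H1 -> wf H2 ->
  minor G1 H1 -> minor G2 H2 -> minor (dunion G1 G2) (dunion H1 H2).
Proof.
move=> wG2 wH1 wH2 G1_H1 G2_H2.
apply: minor_trans (minor_dunion_l G1_H1 wG2) _.
apply: minor_cons (iso_step (iso_dunionC H1 G2) (wf_dunion wG2 wH1)) _.
apply: minor_trans (minor_dunion_l G2_H2 wH1) _.
exact/minor_of_step/iso_step/wf_dunion/wH2/wH1/iso_dunionC.
Qed.

(** * Joining two graphs by a bridge *)

Definition addedge (G : mgraph) (u v : 'I_(nv G)) : mgraph :=
  @MGraph (nv G) (ne G + 1)
    (fun e => match split e with inl e' => ends G e' | inr _ => (u, v) end).
Arguments addedge : clear implicits.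

Lemma del_edge_addedge G u v : del_edge G (addedge G u v).
Proof.
exists (rshift (ne G) ord0), id, (@lshift (ne G) 1).
split; first by exists id.
split; first exact: lshift_inj.
split; first by move=> e; rewrite eq_lrshift.
split; last by move=> e; rewrite /= split_lshift mapp_id same_ends_refl.
by move=> e; case: (split_ordP e) => [a -> _ | b ->]; [exists a | rewrite (ord1 b) eqxx].
Qed.

Section Bridge.
Variables (H1 H2 : mgraph) (y1 : 'I_(nv H1)) (x2 : 'I_(nv H2)).

Definition bridge := addedge (dunion H1 H2) (lshift (nv H2) y1) (rshift (nv H1) x2).

Definition inlv : 'I_(nv H1) -> 'I_(nv bridge) := @lshift (nv H1) (nv H2).
Definition inrv : 'I_(nv H2) -> 'I_(nv bridge) := @rshift (nv H1) (nv H2).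
Definition inle (e : 'I_(ne H1)) : 'I_(ne bridge) := lshift 1 (@lshift (ne H1) (ne H2) e).
Definition inre (e : 'I_(ne H2)) : 'I_(ne bridge) := lshift 1 (@rshift (ne H1) (ne H2) e).
Definition bridge_edge : 'I_(ne bridge) := rshift (ne H1 + ne H2) ord0.

Lemma ends_bridge_edge : ends bridge bridge_edge = (inlv y1, inrv x2).
Proof. by rewrite /= split_rshift. Qed.

Lemma embedding_inl : embedding inlv inle.
Proof.
split; [exact: lshift_inj | by move=> a b /lshift_inj /lshift_inj |].
by move=> e; rewrite /= !split_lshift.
Qed.

Lemma embedding_inr : embedding inrv inre.
Proof.
split; [exact: rshift_inj | by move=> a b /lshift_inj /rshift_inj |].
by move=> e; rewrite /= split_lshift split_rshift.
Qed.

Lemma inlv_inrv a b : inlv a <> inrv b.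
Proof. exact: lrshift_neq. Qed.

Lemma wf_bridge : wf H1 -> wf H2 -> wf bridge.
Proof.
move=> wH1 wH2; have /andP [nv_gt0 /forallP loopless] := wf_dunion wH1 wH2.
apply/andP; split=> //; apply/forallP => e; case: (split_ordP e) => [e' -> | b ->] /=.
  by rewrite split_lshift; exact: loopless.
by rewrite split_rshift; apply/eqP; exact: inlv_inrv.
Qed.

Variant bridge_edge_spec : 'I_(ne bridge) -> Type :=
  | BridgeEdgeL e1 : bridge_edge_spec (inle e1)
  | BridgeEdgeR e2 : bridge_edge_spec (inre e2)
  | BridgeEdgeB : bridge_edge_spec bridge_edge.

Lemma bridge_edgeP e : bridge_edge_spec e.
Proof.
case: (split_ordP e) => [a -> | b ->]; last by rewrite (ord1 b); exact: BridgeEdgeB.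
by case: (split_ordP a) => [a1 -> | a2 ->]; [exact: BridgeEdgeL | exact: BridgeEdgeR].
Qed.

Lemma walk_inr (s : steps bridge) c : walk (inrv c) s -> inlv y1 \notin map snd s ->
  exists t, s = map_steps inrv inre t.
Proof.
elim: s c => [|[e w] s IH] c; first by exists [::].
rewrite walk_cons map_cons inE negb_or => /andP [e_ends s_walk] /andP [w_y1 s_y1].
case: (bridge_edgeP e) e_ends => [e1 | e2 |].
- case: embedding_inl => _ _ ->; case: (ends H1 e1) => u v.
  by case/same_endsE => [[/inlv_inrv] | [_ /inlv_inrv]].
- case: embedding_inr => _ _ ->; case: (ends H2 e2) => u v /same_ends_snd w_e2.
  have [d w_d] : exists d, w = inrv d by case: w_e2 => ->; eexists.
  subst w; have [t ->] := IH d s_walk s_y1.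
  by exists ((e2, d) :: t).
- rewrite ends_bridge_edge => /same_endsE [[/inlv_inrv] // | [w_y _]].
  by rewrite w_y eqxx in w_y1.
Qed.

Lemma path_inl_inr (s : steps bridge) a b : walk (inlv a) s -> uniq (inlv a :: map snd s) ->
  endp (inlv a) s = inrv b ->
  exists t1 t2, s = map_steps inlv inle t1 ++ (bridge_edge, inrv x2) :: map_steps inrv inre t2
             /\ endp a t1 = y1.
Proof.
elim: s a => [|[e w] s IH] a; first by move=> _ _ /inlv_inrv.
rewrite walk_cons map_cons cons_uniq => /andP [e_ends s_walk] /andP [a_s s_uniq] s_end.
case: (bridge_edgeP e) e_ends => [e1 | e2 |].
- case: embedding_inl => _ _ ->; case: (ends H1 e1) => u v /same_ends_snd w_e1.
  have [d w_d] : exists d, w = inlv d by case: w_e1 => ->; eexists.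
  subst w; have [t1 [t2 [-> t1_end]]] := IH d s_walk s_uniq s_end.
  by exists ((e1, d) :: t1), t2.
- case: embedding_inr => _ _ ->; case: (ends H2 e2) => u v.
  by case/same_endsE => [[/esym/inlv_inrv] | [_ /esym/inlv_inrv]].
- rewrite ends_bridge_edge => /same_endsE [[/lshift_inj y1_a x2_w] | [_ /esym/inlv_inrv] //].
  subst a w; have y1_s : inlv y1 \notin map snd s by move: a_s; rewrite inE negb_or => /andP [].
  by have [t2 ->] := walk_inr s_walk y1_s; exists [::], t2.
Qed.

Variables (x1 : 'I_(nv H1)) (P1 : steps H1) (P2 : steps H2).
Hypotheses (P1_usp : is_usp x1 P1) (P2_usp : is_usp x2 P2) (P1_end : endp x1 P1 = y1).

Definition bridge_path : steps bridge :=
  map_steps inlv inle P1 ++ (bridge_edge, inrv x2) :: map_steps inrv inre P2.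

Lemma size_bridge_path : size bridge_path = size P1 + (size P2).+1.
Proof. by rewrite size_cat /= !size_map. Qed.

Lemma endp_bridge_path : endp (inlv x1) bridge_path = inrv (endp x2 P2).
Proof. by rewrite endp_cat endp_cons (endp_emb inrv inre). Qed.

Lemma bridge_path_path : is_path (inlv x1) bridge_path.
Proof.
case: P1_usp P2_usp => /andP [P1_walk P1_uniq] _ [/andP [P2_walk P2_uniq] _].
apply/andP; split.
  rewrite walk_cat (walk_emb embedding_inl) P1_walk (endp_emb inlv inle) P1_end walk_cons.
  by rewrite ends_bridge_edge same_ends_refl (walk_emb embedding_inr).
rewrite map_cat map_cons !map_snd_steps [(_, _).2]/= -cat_cons -!map_cons cat_uniq.
case: embedding_inl embedding_inr => inlv_inj _ _ [inrv_inj _ _].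
rewrite (map_inj_uniq inlv_inj) (map_inj_uniq inrv_inj) P1_uniq P2_uniq andbT.
by apply/hasPn => _ /mapP [d _ ->]; apply/mapP => -[c _ /esym /inlv_inrv].
Qed.

Lemma bridge_path_split Q : is_path (inlv x1) Q -> endp (inlv x1) Q = endp (inlv x1) bridge_path ->
  exists t1 t2, [/\ Q = map_steps inlv inle t1 ++ (bridge_edge, inrv x2) :: map_steps inrv inre t2,
    is_path x1 t1, endp x1 t1 = endp x1 P1, is_path x2 t2 & endp x2 t2 = endp x2 P2].
Proof.
move=> Q_path; rewrite endp_bridge_path => Q_end; case/andP: (Q_path) => Q_walk Q_uniq.
have [t1 [t2 [Q_eq t1_end]]] := path_inl_inr Q_walk Q_uniq Q_end.
exists t1, t2; split=> //; last 3 first.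
- by rewrite t1_end P1_end.
- have := Q_path; rewrite Q_eq -cat_rcons -cats1 => /is_path_suffix.
  by rewrite endp_cat (path_emb embedding_inr).
- case: embedding_inr => inrv_inj _ _; apply: inrv_inj.
  by rewrite -Q_end Q_eq endp_cat endp_cons (endp_emb inrv inre).
rewrite -(path_emb embedding_inl).
by apply: (@is_path_prefix _ _ _ ((bridge_edge, inrv x2) :: map_steps inrv inre t2)); rewrite -Q_eq.
Qed.

Lemma bridge_path_usp : is_usp (inlv x1) bridge_path.
Proof.
case: P1_usp P2_usp => _ [P1_min P1_uniq] [_ [P2_min P2_uniq]].
split; first exact: bridge_path_path.
split=> Q Q_path Q_end;
  have [t1 [t2 [-> t1_path t1_end t2_path t2_end]]] := bridge_path_split Q_path Q_end;
  have le1 := P1_min _ t1_path t1_end; have le2 := P2_min _ t2_path t2_end;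
  rewrite size_bridge_path size_cat /= !size_map.
  by rewrite !addnS ltnS leq_add.
move=> size_eq.
have size1 : size t1 = size P1 by lia.
have size2 : size t2 = size P2 by lia.
by rewrite (P1_uniq t1 t1_path t1_end size1) (P2_uniq t2 t2_path t2_end size2).
Qed.

End Bridge.

Lemma minor_bridge H1 H2 y1 x2 : wf H1 -> wf H2 -> minor (dunion H1 H2) (@bridge H1 H2 y1 x2).
Proof.
move=> wH1 wH2; apply: minor_of_step; split; first exact: wf_dunion.
by right; right; left; exact: del_edge_addedge.
Qed.

Lemma spfloor_le_add G G1 G2 : wf G1 -> wf G2 -> iso G (dunion G1 G2) ->
  spfloor G <= spfloor G1 + spfloor G2.
Proof.
move=> wG1 wG2 G_iso.
have [H1 [wH1 [G1_H1 <-]]] := spfloor_attained wG1.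
have [H2 [wH2 [G2_H2 <-]]] := spfloor_attained wG2.
have [x1 [P1 [P1_usp P1_size]]] := usp_attained (proj1 (andP wH1)).
have [x2 [P2 [P2_usp P2_size]]] := usp_attained (proj1 (andP wH2)).
set B := bridge (endp x1 P1) x2.
have G_B : minor G B.
  apply: minor_cons (iso_step G_iso (wf_dunion wG1 wG2)) _.
  exact: minor_trans (minor_dunion wG2 wH1 wH2 G1_H1 G2_H2) (minor_bridge _ _ wH1 wH2).
have := spfloor_le (wf_bridge _ _ wH1 wH2) G_B.
have := usp_ge_path (bridge_path_usp P1_usp P2_usp (erefl (endp x1 P1))).
have := usp_le_nv H1; have := usp_le_nv H2.
rewrite /sp size_bridge_path -P1_size -P2_size /=; lia.
Qed.

Unset Implicit Arguments.

Theorem theorem3p1 (G G1 G2 : mgraph) :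
  wf G1 -> wf G2 -> iso G (dunion G1 G2) ->
  spfloor G = spfloor G1 + spfloor G2.
Proof.
move=> wG1 wG2 G_iso; apply/eqP; rewrite eqn_leq spfloor_le_add //=.
have wG := wf_iso G_iso (wf_dunion wG1 wG2).
have [H [wH [G_H <-]]] := spfloor_attained wG.
apply: spfloor_add_le_sp wG1 wG2 wH _.
exact: minor_cons (iso_step (iso_sym G_iso) wG) G_H.
Qed.
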